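(* Let $Y=T\times_H\mathfrak h^\circ\times\mathbb C^{h+1}$ be a tall local model with moment map $\Phi_Y$ and let $N$ be the degree of its defining polynomial $P(z)=\prod_jz_j^{\xi_j}$. Then for all $[t,\alpha,z]\in\Phi_Y^{-1}(0)$, $$|z|^2=N\Big(\prod_j\xi_j^{\xi_j}\Big)^{-1/N}|P(z)|^{2/N},$$ with the convention $0^0=1$.
   Context: $T$ is a torus with Lie algebra $\mathfrak t$, $H\subseteq T$ a closed subgroup of dimension $h$ with Lie algebra $\mathfrak h$, $\rho\colon H\to(S^1)^{h+1}$ an injective homomorphism, $\eta_i\in\mathfrak h^*$ the differential of the $i$-th component of $\rho$. A fixed inner product on $\mathfrak t$ identifies $\mathfrak t^*\cong\mathfrak h^\circ\oplus\mathfrak h^*$. The local model $Y=T\times_H\mathfrak h^\circ\times\mathbb C^{h+1}$ ($H$ acting on $T$ by multiplication, trivially on $\mathfrak h^\circ$, on $\mathbb C^{h+1}$ by $h\cdot z=\rho(h^{-1})z$) has $T$-action $s\cdot[t,\alpha,z]=[st,\alpha,z]$ and moment map $\Phi_Y([t,\alpha,z])=\alpha+\frac12\sum_i\eta_i|z_i|^2$. $Y$ is tall if $\Phi_Y^{-1}(0)$ contains more than one $T$-orbit; then there is a unique $\xi\in\mathbb Z_{\ge0}^{h+1}$ with $\lambda\mapsto\prod_j\lambda_j^{\xi_j}$ giving a short exact sequence $1\to H\xrightarrow{\rho}(S^1)^{h+1}\to S^1\to1$; the defining polynomial is $P(z)=\prod_jz_j^{\xi_j}$ and its degree is $N=\sum_j\xi_j$.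 *)

From HB Require Import structures.
From mathcomp Require Import all_boot all_order all_algebra.
From mathcomp Require Import all_classical all_reals all_analysis.
From mathcomp Require Import complex.
Set Implicit Arguments. Unset Strict Implicit. Unset Printing Implicit Defensive.
Import Order.TTheory GRing.Theory Num.Theory.
Import numFieldNormedType.Exports.
Local Open Scope ring_scope.
Local Open Scope classical_set_scope.

(* Conventions:
   - The torus T of dimension n is R^n / Z^n; an element of T is represented
     by a row vector t : 'rV[R]_n (two vectors represent the same element iff
     their difference is integral).  Its Lie algebra is t = R^n and exp is the
     quotient map.  S^1 = R/Z likewise, and theta in R/Z acts on C by
     multiplication with e^{2 pi i theta}.
   - A subset of T is represented by its (Z^n-invariant) preimage in R^n. *)

Section Defs.
Variable R : realType.

(* v represents 0 in the torus R^m/Z^m *)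
Definition intvec m (v : 'rV[R]_m) : Prop := forall j, v 0 j \is a Num.int.

(* canonical pairing t^* x t -> R (t^* = R^n via the dual basis) *)
Definition pairing n (a X : 'rV[R]_n) : R := \sum_j a 0 j * X 0 j.

Definition circ (th : R) : R[i] := Complex (cos (2 * pi * th)) (sin (2 * pi * th)).

Definition cmod (w : R[i]) : R := Num.sqrt (@complex.Re R w ^+ 2 + @complex.Im R w ^+ 2).

Definition closed_subgroup n (H : set 'rV[R]_n) : Prop :=
  [/\ forall v, intvec v -> H v,
      forall x y, H x -> H y -> H (x - y) &
      closed H].

Definition lie_algebra n (H : set 'rV[R]_n) (hsp : {vspace 'rV[R]_n}) : Prop :=
  forall X, (X \in hsp) <-> (forall s : R, H (s *: X)).

(* rho (on representatives) defines a homomorphism H -> (S^1)^m = R^m/Z^m *)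
Definition torus_hom n m (H : set 'rV[R]_n) (rho : 'rV[R]_n -> 'rV[R]_m) : Prop :=
  (forall v, intvec v -> intvec (rho v)) /\
  (forall x y, H x -> H y -> intvec (rho (x - y) - (rho x - rho y))).

Definition torus_hom_injective n m (H : set 'rV[R]_n) (rho : 'rV[R]_n -> 'rV[R]_m) : Prop :=
  forall x, H x -> intvec (rho x) -> intvec x.

(* eta_i in h^* (i < m) are the components of the differential of rho:
   each eta_i is linear on h and rho (exp X) = exp (eta_1 X, ..., eta_m X). *)
Definition is_differential n m (hsp : {vspace 'rV[R]_n})
    (rho : 'rV[R]_n -> 'rV[R]_m) (eta : 'I_m -> 'rV[R]_n -> R) : Prop :=
  (forall i (a : R) X Y, X \in hsp -> Y \in hsp ->
      eta i (a *: X + Y) = a * eta i X + eta i Y) /\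
  (forall X, X \in hsp -> intvec (rho X - \row_i eta i X)).

(* 1 -> H --rho--> (S^1)^m --(lambda |-> prod lambda_j^xi_j)--> S^1 -> 1 is
   exact (injectivity of rho is stated separately); on R/Z the character
   lambda |-> prod_j lambda_j^xi_j is theta |-> sum_j xi_j theta_j. *)
Definition exact_at_middle_and_right n m (H : set 'rV[R]_n)
    (rho : 'rV[R]_n -> 'rV[R]_m) (xi : 'I_m -> nat) : Prop :=
  (forall c : R, exists th : 'rV[R]_m,
      (\sum_j (xi j)%:R * th 0 j - c) \is a Num.int) /\
  (forall th : 'rV[R]_m,
      ((\sum_j (xi j)%:R * th 0 j) \is a Num.int) <->
      exists x, H x /\ intvec (rho x - th)).

Definition in_annihilator n (hsp : {vspace 'rV[R]_n}) (alpha : 'rV[R]_n) : Prop :=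
  forall X, X \in hsp -> pairing alpha X = 0.

(* Moment map of Y = T x_H h° x C^m at [t, alpha, z], as an element of
   t^* = h° (+) h^*: first component in h°, second a functional on h. *)
Definition Phi_Y n m (eta : 'I_m -> 'rV[R]_n -> R)
    (t alpha : 'rV[R]_n) (z : 'I_m -> R[i]) : 'rV[R]_n * ('rV[R]_n -> R) :=
  (alpha, fun X => 2^-1 * \sum_i eta i X * cmod (z i) ^+ 2).

Definition Phi_Y_zero n m (hsp : {vspace 'rV[R]_n}) (eta : 'I_m -> 'rV[R]_n -> R)
    (t alpha : 'rV[R]_n) (z : 'I_m -> R[i]) : Prop :=
  (Phi_Y eta t alpha z).1 = 0 /\
  forall X, X \in hsp -> (Phi_Y eta t alpha z).2 X = 0.

(* [t, alpha, z] and [t', alpha', z'] lie in the same T-orbit of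
   Y = (T x h° x C^m)/H, where x in H acts by
   x.(t, alpha, z) = (x t, alpha, rho(x^{-1}) z) and s in T acts by
   s.[t, alpha, z] = [s t, alpha, z]. *)
Definition same_T_orbit n m (H : set 'rV[R]_n) (rho : 'rV[R]_n -> 'rV[R]_m)
    (t alpha : 'rV[R]_n) (z : 'I_m -> R[i])
    (t' alpha' : 'rV[R]_n) (z' : 'I_m -> R[i]) : Prop :=
  exists (s x : 'rV[R]_n), [/\ H x, intvec (t' - (x + (s + t))), alpha' = alpha &
     forall j, z' j = circ (- rho x 0 j) * z j].

Definition tall n m (H : set 'rV[R]_n) (hsp : {vspace 'rV[R]_n})
    (rho : 'rV[R]_n -> 'rV[R]_m) (eta : 'I_m -> 'rV[R]_n -> R) : Prop :=
  exists (t alpha t' alpha' : 'rV[R]_n) (z z' : 'I_m -> R[i]),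
    [/\ in_annihilator hsp alpha, in_annihilator hsp alpha',
        Phi_Y_zero hsp eta t alpha z, Phi_Y_zero hsp eta t' alpha' z' &
        ~ same_T_orbit H rho t alpha z t' alpha' z'].

Definition def_poly m (xi : 'I_m -> nat) (z : 'I_m -> R[i]) : R[i] :=
  \prod_j z j ^+ xi j.

Definition def_degree m (xi : 'I_m -> nat) : nat := (\sum_j xi j)%N.

End Defs.

From HB Require Import structures.
From mathcomp Require Import all_boot all_order all_algebra.
From mathcomp Require Import all_classical all_reals all_analysis.
From mathcomp Require Import complex.
From mathcomp Require Import zify ring.
Set Implicit Arguments. Unset Strict Implicit. Unset Printing Implicit Defensive.
Import Order.TTheory GRing.Theory Num.Theory.
Import numFieldNormedType.Exports.
Local Open Scope ring_scope.
Local Open Scope classical_set_scope.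

(* On Phi_Y^{-1}(0) the vector (|z_j|^2)_j is annihilated by the weights eta_j
   restricted to h.  Injectivity of rho makes (eta_j)_j : h -> R^{h+1}
   injective, so these annihilating vectors form a line; exactness of
   H -> (S^1)^{h+1} -> S^1 puts xi on that line and makes it nonzero.  Hence
   |z_j|^2 = lam xi_j with lam >= 0, so |z|^2 = lam N and
   |P(z)|^2 = lam^N prod_j xi_j^xi_j, which gives the formula. *)

Lemma half_Nint (R : realType) : (2^-1 : R) \isn't a Num.int.
Proof.
apply/negP => /intrP[m hm].
have m_gt0 : (0 : R) < m%:~R by rewrite -hm.
have m_lt1 : m%:~R < (1 : R) by rewrite -hm invf_lt1 // ltr1n.
rewrite ltr0z in m_gt0; rewrite ltrz1 in m_lt1; lia.
Qed.

Lemma all_multiples_int_eq0 (R : realType) (L : R) :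
  (forall s : R, s * L \is a Num.int) -> L = 0.
Proof.
move=> multL; apply/eqP/negPn/negP => L_neq0.
by have := multL (2^-1 / L); rewrite -mulrA mulVf // mulr1 (negPf (half_Nint R)).
Qed.

Section ComplexModulus.
Variable R : realType.

Lemma cmodE (w : R[i]) : cmod w = Normc.normc w.
Proof. by case: w. Qed.

Lemma cmod_ge0 (w : R[i]) : 0 <= cmod w.
Proof. exact: sqrtr_ge0. Qed.

Lemma cmod_prod m (F : 'I_m -> R[i]) : cmod (\prod_j F j) = \prod_j cmod (F j).
Proof.
apply: (big_morph (@cmod R)) => [a b|]; rewrite !cmodE.
- exact: Normc.normcM.
- exact: Normc.normc1.
Qed.

Lemma cmodX (w : R[i]) k : cmod (w ^+ k) = cmod w ^+ k.
Proof.
by rewrite -(card_ord k) -!prodr_const cmod_prod.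
Qed.

End ComplexModulus.

Lemma rV_ker_corank1 (F : fieldType) (d m : nat) (A : 'M[F]_(m.+1, d))
    (u v : 'rV[F]_m.+1) :
  \rank A = m -> u *m A = 0 -> v *m A = 0 -> v != 0 ->
  exists lam, u = lam *: v.
Proof.
move=> rankA uA vA v_neq0.
have rankK : \rank (kermx A) = 1%N by rewrite mxrank_ker rankA subSnn.
have vK : (v <= kermx A)%MS by apply/sub_kermxP.
have Kv : (kermx A <= v)%MS.
  by rewrite -(mxrank_leqif_sup vK).2 rank_rV v_neq0 rankK.
by apply/sub_rVP; apply: submx_trans Kv; apply/sub_kermxP.
Qed.

Section Weights.
Variables (R : realType) (n m : nat) (hsp : {vspace 'rV[R]_n}).
Variable eta : 'I_m -> 'rV[R]_n -> R.
Hypothesis eta_linear : forall i (a : R) X Y, X \in hsp -> Y \in hsp ->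
  eta i (a *: X + Y) = a * eta i X + eta i Y.

Lemma eta0 i : eta i 0 = 0.
Proof.
have := eta_linear i 1 (mem0v hsp) (mem0v hsp).
by rewrite scale1r addr0 mul1r -{1}[eta i 0]addr0 => /addrI <-.
Qed.

Lemma etaZ i s X : X \in hsp -> eta i (s *: X) = s * eta i X.
Proof. by move=> hX; rewrite -[s *: X]addr0 eta_linear ?mem0v // eta0 addr0. Qed.

Let B := vbasis hsp.

Lemma vbasis_nth_mem (k : 'I_(\dim hsp)) : B`_k \in hsp.
Proof. by apply: vbasis_mem; apply: mem_nth; rewrite size_tuple. Qed.

Lemma eta_vbasis_comb i (a : 'I_(\dim hsp) -> R) :
  eta i (\sum_k a k *: B`_k) = \sum_k a k * eta i B`_k.
Proof.
pose P y1 y2 := y2 \in hsp /\ eta i y2 = y1.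
suff [] : P (\sum_k a k * eta i B`_k) (\sum_k a k *: B`_k) by [].
apply: big_rec2 => [|k y1 y2 _ [y2_in eta_y2]].
  by split; [exact: mem0v | exact: eta0].
by split; rewrite ?rpredD ?rpredZ ?vbasis_nth_mem // eta_linear ?vbasis_nth_mem ?eta_y2.
Qed.

Definition weight_mx : 'M[R]_(m, \dim hsp) := \matrix_(i, k) eta i B`_k.

Lemma weight_mx_ker (v : 'rV[R]_m) :
  (forall X, X \in hsp -> \sum_i v 0 i * eta i X = 0) -> v *m weight_mx = 0.
Proof.
move=> v_ann; apply/rowP => k; rewrite !mxE -[RHS](v_ann _ (vbasis_nth_mem k)).
by apply: eq_bigr => i _; rewrite mxE.
Qed.

Lemma rank_weight_mx :
  (forall X, X \in hsp -> (forall i, eta i X = 0) -> X = 0) ->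
  \rank weight_mx = \dim hsp.
Proof.
move=> eta_inj; rewrite -mxrank_tr; apply/eqP; apply: inj_row_free => v vA.
pose X := \sum_k v 0 k *: B`_k.
have X_in : X \in hsp by apply: rpred_sum => k _; rewrite rpredZ ?vbasis_nth_mem.
have X0 : X = 0.
  apply: eta_inj => // i; rewrite eta_vbasis_comb.
  have := congr1 (fun M : 'M[R]_(1, m) => M 0 i) vA; rewrite !mxE => vA_i.
  rewrite -[RHS]vA_i.
  by apply: eq_bigr => k _; rewrite !mxE.
apply/rowP => k; rewrite mxE.
exact: (freeP (basis_free (vbasisP hsp)) (fun k => v 0 k) X0 k).
Qed.

End Weights.

Section LocalModel.
Variables (R : realType) (n m : nat) (H : set 'rV[R]_n).
Variables (hsp : {vspace 'rV[R]_n}) (rho : 'rV[R]_n -> 'rV[R]_m).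
Variable eta : 'I_m -> 'rV[R]_n -> R.
Hypothesis hsp_lie : lie_algebra H hsp.
Hypothesis eta_diff : is_differential hsp rho eta.

Lemma rho_scale_int i s X : X \in hsp -> rho (s *: X) 0 i - s * eta i X \is a Num.int.
Proof.
move=> hX; have := eta_diff.2 _ (memvZ s hX) i.
by rewrite !mxE (etaZ eta_diff.1).
Qed.

Lemma eta_injective : torus_hom_injective H rho ->
  forall X, X \in hsp -> (forall i, eta i X = 0) -> X = 0.
Proof.
move=> rho_inj X hX eta_X0.
have sX_int (s : R) : intvec (s *: X).
  apply: rho_inj; first by move/hsp_lie: hX.
  by move=> j; have := rho_scale_int j s hX; rewrite eta_X0 mulr0 subr0.
apply/rowP => j; rewrite mxE; apply: all_multiples_int_eq0 => s.
by have := sX_int s j; rewrite mxE mulrC.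
Qed.

(* The character lambda |-> prod_j lambda_j^xi_j kills rho(exp(sX)) for every
   real s, so its differential sum_j xi_j eta_j vanishes on h. *)
Lemma xi_weights_vanish (xi : 'I_m -> nat) : exact_at_middle_and_right H rho xi ->
  forall X, X \in hsp -> \sum_j (xi j)%:R * eta j X = 0.
Proof.
move=> [_ ker_char] X hX; apply: all_multiples_int_eq0 => s.
have char_int : \sum_j (xi j)%:R * rho (s *: X) 0 j \is a Num.int.
  apply/ker_char; exists (s *: X).
  by split; [move/hsp_lie: hX | move=> j; rewrite subrr mxE].
rewrite mulr_sumr.
have -> : \sum_j s * ((xi j)%:R * eta j X) = \sum_j (xi j)%:R * rho (s *: X) 0 j
    - \sum_j (xi j)%:R * (rho (s *: X) 0 j - s * eta j X).
  by rewrite -sumrB; apply: eq_bigr => j _; ring.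
by rewrite rpredB // rpred_sum // => j _; rewrite rpredM ?natr_int ?rho_scale_int.
Qed.

End LocalModel.

Lemma exact_char_nontrivial (R : realType) n m (H : set 'rV[R]_n)
    (rho : 'rV[R]_n -> 'rV[R]_m) (xi : 'I_m -> nat) :
  exact_at_middle_and_right H rho xi -> exists j, (0 < xi j)%N.
Proof.
move=> [char_onto _]; apply/existsP; apply: contraT; rewrite negb_exists => /forallP xi0.
have [th th_int] := char_onto 2^-1.
rewrite big1 ?sub0r ?rpredN in th_int; first by rewrite (negPf (half_Nint R)) in th_int.
by move=> j _; have := xi0 j; rewrite -eqn0Ngt => /eqP ->; rewrite mul0r.
Qed.

Lemma sqr_cmod_proportional (R : realType) n h (H : set 'rV[R]_n)
    (hsp : {vspace 'rV[R]_n}) (rho : 'rV[R]_n -> 'rV[R]_h.+1)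
    (eta : 'I_h.+1 -> 'rV[R]_n -> R) (xi : 'I_h.+1 -> nat)
    (t alpha : 'rV[R]_n) (z : 'I_h.+1 -> R[i]) :
  lie_algebra H hsp -> \dim hsp = h ->
  torus_hom_injective H rho -> is_differential hsp rho eta ->
  exact_at_middle_and_right H rho xi -> Phi_Y_zero hsp eta t alpha z ->
  exists2 lam, 0 <= lam & forall j, cmod (z j) ^+ 2 = lam * (xi j)%:R.
Proof.
move=> hsp_lie dim_hsp rho_inj eta_diff xi_exact [_ Phi0].
have [j0 xi_j0] := exact_char_nontrivial xi_exact.
have rankA : \rank (weight_mx hsp eta) = h.
  rewrite rank_weight_mx ?dim_hsp //; first by case: eta_diff.
  exact: eta_injective hsp_lie eta_diff rho_inj.
have [lam lamE] : exists lam, \row_j cmod (z j) ^+ 2 = lam *: \row_j (xi j)%:R.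
  apply: (rV_ker_corank1 rankA).
  - apply: weight_mx_ker => X hX; have /eqP := Phi0 X hX.
    rewrite /= mulf_eq0 invr_eq0 pnatr_eq0 /= => /eqP sum0.
    by rewrite -[RHS]sum0; apply: eq_bigr => i _; rewrite mxE mulrC.
  - apply: weight_mx_ker => X hX.
    rewrite -[RHS](xi_weights_vanish hsp_lie eta_diff xi_exact hX).
    by apply: eq_bigr => i _; rewrite mxE.
  - apply/eqP => /rowP /(_ j0) /eqP; rewrite !mxE pnatr_eq0 => /eqP xi0.
    by rewrite xi0 in xi_j0.
have zE j : cmod (z j) ^+ 2 = lam * (xi j)%:R.
  by have := congr1 (fun M : 'M[R]_(1, h.+1) => M 0 j) lamE; rewrite !mxE.
exists lam => //; have := sqr_ge0 (cmod (z j0)).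
by rewrite zE pmulr_lge0 // ltr0n.
Qed.

Lemma sqr_norm_from_proportional (R : realType) m (xi : 'I_m -> nat)
    (z : 'I_m -> R[i]) (lam : R) :
  (0 < def_degree xi)%N -> 0 <= lam ->
  (forall j, cmod (z j) ^+ 2 = lam * (xi j)%:R) ->
  \sum_j cmod (z j) ^+ 2 =
    (def_degree xi)%:R
    * ((\prod_j ((xi j) ^ (xi j))%N%:R) `^ (- ((def_degree xi)%:R)^-1))
    * (cmod (def_poly xi z) `^ (2 / (def_degree xi)%:R)).
Proof.
move=> N_gt0 lam_ge0 zE; set N := def_degree xi; set Q := \prod_j _.
have Q_gt0 : 0 < Q.
  by apply: prodr_gt0 => j _; rewrite ltr0n expn_gt0; case: (xi j).
have PE : cmod (def_poly xi z) ^+ 2 = lam ^+ N * Q.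
  rewrite /def_poly cmod_prod -prodrXl.
  under eq_bigr do rewrite cmodX -exprM mulnC exprM zE exprMn -natrX.
  by rewrite big_split /= prodrXr.
have N_neq0 : (N%:R : R) != 0 by rewrite pnatr_eq0 -lt0n.
have -> : cmod (def_poly xi z) `^ (2 / N%:R) = lam * Q `^ N%:R^-1.
  rewrite powRrM powR_mulrn ?cmod_ge0 // PE powRM ?exprn_ge0 ?(ltW Q_gt0) //.
  by rewrite -powR_mulrn // -powRrM mulfV // powRr1.
under eq_bigr do rewrite zE.
rewrite -mulr_sumr -natr_sum powRN.
have Qroot_gt0 : 0 < Q `^ N%:R^-1 by apply: powR_gt0.
by field; rewrite gt_eqF.
Qed.

Theorem lemma2p7 (R : realType) (n h : nat)
    (H : set 'rV[R]_n) (hsp : {vspace 'rV[R]_n})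
    (rho : 'rV[R]_n -> 'rV[R]_h.+1) (eta : 'I_h.+1 -> 'rV[R]_n -> R)
    (xi : 'I_h.+1 -> nat) :
  closed_subgroup H ->
  lie_algebra H hsp ->
  \dim hsp = h ->
  torus_hom H rho ->
  torus_hom_injective H rho ->
  is_differential hsp rho eta ->
  tall H hsp rho eta ->
  exact_at_middle_and_right H rho xi ->
  forall (t alpha : 'rV[R]_n) (z : 'I_h.+1 -> R[i]),
    in_annihilator hsp alpha ->
    Phi_Y_zero hsp eta t alpha z ->
    \sum_j cmod (z j) ^+ 2 =
      (def_degree xi)%:R
      * ((\prod_j ((xi j) ^ (xi j))%N%:R) `^ (- ((def_degree xi)%:R)^-1))
      * (cmod (def_poly xi z) `^ (2 / (def_degree xi)%:R)).
Proof.
move=> _ hsp_lie dim_hsp _ rho_inj eta_diff _ xi_exact t alpha z _ Phi0.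
have [lam lam_ge0 zE] :=
  sqr_cmod_proportional hsp_lie dim_hsp rho_inj eta_diff xi_exact Phi0.
have [j0 xi_j0] := exact_char_nontrivial xi_exact.
have N_gt0 : (0 < def_degree xi)%N.
  by rewrite /def_degree (bigD1 j0) //= addn_gt0 xi_j0.
exact: sqr_norm_from_proportional N_gt0 lam_ge0 zE.
Qed.
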